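(* Let $\varphi:\Lambda\to\Gamma$ be a regular covering map of finite simplicial graphs. If $u_1,u_2$ are vertices of $\Lambda$ with $u_1\lesssim u_2$, then $\varphi(u_1)\lesssim\varphi(u_2)$. Moreover, for every vertex $u$ of $\Lambda$, $\varphi(V\Lambda_{\gtrsim u})=V\Gamma_{\gtrsim_\varphi\varphi(u)}$.
   Context: Graphs are finite simplicial graphs; subgraphs are induced. $\mathrm{lk}(v)$ is the subgraph induced by the neighbours of $v$ and $\mathrm{st}(v)$ the subgraph induced by $\mathrm{lk}(v)\cup\{v\}$. The link-star order on vertices: $x\lesssim y$ iff $\mathrm{lk}(x)\subseteq\mathrm{st}(y)$; $V\Lambda_{\gtrsim u}=\{u'\in V\Lambda: u\lesssim u'\}$. A covering map $\varphi:\Lambda\to\Gamma$ is a surjective simplicial map mapping the neighbours of each vertex $u$ bijectively onto the neighbours of $\varphi(u)$; regular means the group of graph automorphisms $\mu$ of $\Lambda$ with $\varphi\mu=\varphi$ acts transitively on each fiber. For vertices $x,y$ of $\Gamma$, $x\lesssim_\varphi y$ means: for every $w\in\varphi^{-1}(x)$ there is $w'\in\varphi^{-1}(y)$ with $\mathrm{lk}(w)\subseteq\mathrm{st}(w')$; $V\Gamma_{\gtrsim_\varphi x}=\{y\in V\Gamma: x\lesssim_\varphi y\}$. *)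

From mathcomp Require Import all_boot.
From mathcomp Require Import perm.
Set Implicit Arguments. Unset Strict Implicit. Unset Printing Implicit Defensive.

Definition simple_graph (T : finType) (e : rel T) : Prop :=
  symmetric e /\ irreflexive e.

(* link and star (vertex sets of the induced subgraphs) *)
Definition lk (T : finType) (e : rel T) (v : T) : {set T} := [set w | e v w].
Definition st (T : finType) (e : rel T) (v : T) : {set T} := v |: lk e v.

Definition lsle (T : finType) (e : rel T) (x y : T) : bool :=
  lk e x \subset st e y.

Definition upset (T : finType) (e : rel T) (u : T) : {set T} :=
  [set u' | lsle e u u'].

Definition covering (L G : finType) (eL : rel L) (eG : rel G) (phi : L -> G) : Prop :=
  [/\ forall x y, eL x y -> eG (phi x) (phi y),
      forall y : G, exists x : L, phi x = y,
      forall u, {in lk eL u &, injective phi} &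
      forall u, phi @: lk eL u = lk eG (phi u)].

Definition graph_aut (L : finType) (eL : rel L) (mu : {perm L}) : Prop :=
  forall x y, eL (mu x) (mu y) = eL x y.

Definition regular_covering (L G : finType) (eL : rel L) (eG : rel G) (phi : L -> G) : Prop :=
  covering eL eG phi /\
  forall w w' : L, phi w = phi w' ->
    exists mu : {perm L}, [/\ graph_aut eL mu, (forall x, phi (mu x) = phi x) & mu w = w'].

Definition lsle_phi (L G : finType) (eL : rel L) (phi : L -> G) (x y : G) : bool :=
  [forall w : L, (phi w == x) ==> [exists w' : L, (phi w' == y) && lsle eL w w']].

Definition upset_phi (L G : finType) (eL : rel L) (phi : L -> G) (x : G) : {set G} :=
  [set y | lsle_phi eL phi x y].

From mathcomp Require Import all_boot.
From mathcomp Require Import perm.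

(* The link-star order is defined by an inclusion of neighbourhoods, and both a
   covering map and a graph automorphism transport neighbourhoods onto
   neighbourhoods.  Hence a covering map is monotone for the order, and
   automorphisms preserve it; the deck transformations of a regular covering
   move any lift of phi u to any other one, which turns an upper bound of u
   into an upper bound of every other lift of phi u. *)

Section GraphAutomorphism.

Variables (T : finType) (e : rel T) (mu : {perm T}).
Hypothesis mu_aut : graph_aut e mu.

Lemma lk_aut (x : T) : lk e (mu x) = mu @: lk e x.
Proof.
apply/setP => z; rewrite -{1 2}(permKV mu z) mem_imset; last exact: perm_inj.
by rewrite !inE mu_aut.
Qed.

Lemma st_aut (x : T) : st e (mu x) = mu @: st e x.
Proof. by rewrite /st imsetU1 lk_aut. Qed.

Lemma lsle_aut (x y : T) : lsle e x y -> lsle e (mu x) (mu y).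
Proof. by rewrite /lsle lk_aut st_aut; apply: imsetS. Qed.

End GraphAutomorphism.

Section SimplicialMap.

Variables (L G : finType) (eL : rel L) (eG : rel G) (phi : L -> G).
Hypothesis phi_edge : forall x y, eL x y -> eG (phi x) (phi y).

Lemma st_map (u : L) : phi @: st eL u \subset st eG (phi u).
Proof.
apply/subsetP => _ /imsetP [x + ->]; rewrite !inE => /orP [/eqP -> | ux].
  by rewrite eqxx.
by rewrite phi_edge ?orbT.
Qed.

Lemma lsle_map (u1 u2 : L) :
  lk eG (phi u1) \subset phi @: lk eL u1 ->
  lsle eL u1 u2 -> lsle eG (phi u1) (phi u2).
Proof.
move=> lk_onto le12; apply: subset_trans lk_onto _.
exact: subset_trans (imsetS phi le12) (st_map u2).
Qed.

End SimplicialMap.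

Section UpsetImage.

Variables (L G : finType) (eL : rel L) (phi : L -> G).

Lemma upset_phi_sub_imset (u : L) : upset_phi eL phi (phi u) \subset phi @: upset eL u.
Proof.
apply/subsetP => y; rewrite inE => /forallP /(_ u); rewrite eqxx /=.
by case/existsP => w /andP [/eqP <- uw]; rewrite imset_f ?inE.
Qed.

Hypothesis phi_deck : forall w w' : L, phi w = phi w' ->
  exists mu : {perm L}, [/\ graph_aut eL mu, (forall x, phi (mu x) = phi x) & mu w = w'].

Lemma imset_upset_sub_phi (u : L) : phi @: upset eL u \subset upset_phi eL phi (phi u).
Proof.
apply/subsetP => _ /imsetP [u' + ->]; rewrite !inE => uu'.
apply/forallP => w; apply/implyP => /eqP phi_w.
have [mu [mu_aut mu_phi mu_u]] := phi_deck u w (esym phi_w).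
apply/existsP; exists (mu u'); rewrite mu_phi eqxx -mu_u.
exact: lsle_aut.
Qed.

End UpsetImage.

Theorem lemma3p1 (L G : finType) (eL : rel L) (eG : rel G) (phi : L -> G)
  (hL : simple_graph eL) (hG : simple_graph eG)
  (hphi : regular_covering eL eG phi) :
  (forall u1 u2 : L, lsle eL u1 u2 -> lsle eG (phi u1) (phi u2)) /\
  (forall u : L, phi @: upset eL u = upset_phi eL phi (phi u)).
Proof.
case: hphi => [[phi_edge _ _ phi_lk] phi_deck]; split.
  by move=> u1 u2; apply: lsle_map => //; rewrite phi_lk.
move=> u; apply/eqP; rewrite eqEsubset.
by rewrite imset_upset_sub_phi ?upset_phi_sub_imset.
Qed.
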